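(* The polynomial $p(t)=t^4+3t^2+1$ is irreducible in $\Gamma_7=\mathbb{Q}(\zeta_7)[t,t^{-1}]$, where $\zeta_7$ is a primitive $7$-th root of unity. *)

From HB Require Import structures.
From mathcomp Require Import all_boot all_order all_algebra all_field.
Set Implicit Arguments. Unset Strict Implicit. Unset Printing Implicit Defensive.
Import GRing.Theory Num.Theory.
Local Open Scope ring_scope.

(* The Laurent polynomial ring K[t,t^-1] is modelled via {poly K}: every Laurent
   polynomial is t^(-a) * f with f : {poly K}.  Its units are exactly c t^k, c != 0.
   A polynomial f represents (up to the unit t^(-a)) a unit iff it is a monomial. *)
Definition laurent_monomial (K : fieldType) (f : {poly K}) : Prop :=
  exists (c : K) (k : nat), c != 0 /\ f = c *: 'X^k.

(* p is irreducible in K[t,t^-1]: p is nonzero, not a unit, and whenever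
   p = (t^-a f) (t^-b g), i.e. t^(a+b) p = f g, one factor is a unit. *)
Definition laurent_irreducible (K : fieldType) (p : {poly K}) : Prop :=
  [/\ p != 0, ~ laurent_monomial p &
      forall (n : nat) (f g : {poly K}), 'X^n * p = f * g ->
        laurent_monomial f \/ laurent_monomial g].

From HB Require Import structures.
From mathcomp Require Import all_boot all_order all_algebra all_field.
From mathcomp Require Import ring lra zify.
Import GRing.Theory Num.Theory.
Set Implicit Arguments.
Unset Strict Implicit.
Unset Printing Implicit Defensive.
Local Open Scope ring_scope.

(* Q(zeta_7) has degree 6 over Q, and the Gauss period w = 2 (zeta + zeta^2 + zeta^4) + 1
   satisfies w^2 = -7.  A square root of a rational number lying outside Q(w) would generate a
   subfield of degree 4, which does not divide 6; hence the rationals that are squares in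
   Q(zeta_7) are those of the form r^2 or -7 r^2, and none of 5, -1, -5 is one of them.
   On the other hand, at a root of t^4 + 3 t^2 + 1 we would have (2 t^2 + 3)^2 = 5, and a
   factorization into two monic quadratics forces 5, -1 or -5 to be a square.  As the constant
   term is nonzero, factorizations in the Laurent ring reduce to polynomial ones. *)

Section LaurentPolynomials.
Variable F : fieldType.
Implicit Types (p f g : {poly F}).

Lemma polyXn_neq0 n : ('X^n : {poly F}) != 0.
Proof. by rewrite expf_neq0 // polyX_eq0. Qed.

Lemma polyXn_factor p : p != 0 -> exists n p1, p = 'X^n * p1 /\ ~~ root p1 0.
Proof.
move=> p0; have [n [p1 p10 ->]] := multiplicity_XsubC p 0.
by exists n, p1; rewrite subr0 mulrC; move: p10; rewrite p0.
Qed.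

Lemma mulXn_inj m n p q : ~~ root p 0 -> ~~ root q 0 ->
  'X^m * p = 'X^n * q -> m = n /\ p = q.
Proof.
wlog le_mn : m n p q / (m <= n)%N => [hwlog p0 q0 e|].
  have [/hwlog|/ltnW/hwlog] := leqP m n; first exact.
  by move=> /(_ _ _ q0 p0 (esym e)) [-> ->].
move=> p0 q0; rewrite -(subnKC le_mn) exprD -mulrA => /(mulfI (polyXn_neq0 m)) e.
suff mn : (n - m = 0)%N by rewrite e mn mul1r addn0.
apply: contraNeq p0 => mn; apply/rootP.
by rewrite e hornerM hornerXn expr0n (negPf mn) mul0r.
Qed.

Lemma laurent_monomialXnM n p : size p = 1%N -> laurent_monomial ('X^n * p).
Proof.
move=> /eqP/size_poly1P [c c0 ->].
by exists c, n; rewrite mulrC mul_polyC.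
Qed.

Lemma laurent_irreducible_poly p :
  ~~ root p 0 -> irreducible_poly p -> laurent_irreducible p.
Proof.
move=> p0 [size_p irr_p]; have p_neq0 : p != 0 by rewrite -size_poly_gt0 ltnW.
split=> // [[c [k [c0 e]]] | n f g e].
  have k0 : k = 0%N.
    apply: contraNeq p0 => k0; apply/rootP.
    by rewrite e hornerZ hornerXn expr0n (negPf k0) mulr0.
  by move: size_p; rewrite e k0 expr0 size_scale // size_poly1.
have [f0 g0] : f != 0 /\ g != 0.
  by apply/andP; rewrite -negb_or -mulf_eq0 -e mulf_neq0 ?polyXn_neq0.
have [a [f1 [def_f f10]]] := polyXn_factor f0.
have [b [g1 [def_g g10]]] := polyXn_factor g0.
have {}e : 'X^n * p = 'X^(a + b) * (f1 * g1) by rewrite e def_f def_g exprD; ring.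
have fg10 : ~~ root (f1 * g1) 0 by rewrite rootM negb_or f10.
have [_ {}e] := mulXn_inj p0 fg10 e.
have [f1_unit | /irr_p f1_irr] := eqVneq (size f1) 1%N.
  by left; rewrite def_f; apply: laurent_monomialXnM.
right; rewrite def_g; apply: laurent_monomialXnM.
have f1_neq0 : f1 != 0 by apply: contraNneq p_neq0 => f1_0; rewrite e f1_0 mul0r.
have : f1 * 1 %= f1 * g1 by rewrite mulr1 -e f1_irr // e dvdp_mulr.
by rewrite eqp_mul2l // eqp_sym => /eqp_size; rewrite size_poly1.
Qed.
End LaurentPolynomials.

Lemma quartic_irreducible (F : fieldType) (p : {poly F}) :
    size p = 5%N -> (forall x, ~~ root p x) ->
    (forall q : {poly F}, size q = 3%N -> ~~ (q %| p)) -> irreducible_poly p.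
Proof.
move=> size_p root'p quad'p; split=> [|q sz_q_neq1 q_dv_p]; first by rewrite size_p.
have nz_p : p != 0 by rewrite -size_poly_gt0 size_p.
have nz_q : q != 0 by apply: contraTneq q_dv_p => ->; rewrite dvd0p.
have [r def_p] := dvdpP _ _ q_dv_p.
have nz_r : r != 0 by apply: contraNneq nz_p => r0; rewrite def_p r0 mul0r.
rewrite -dvdp_size_eqp // eqn_leq dvdp_leq //= leqNgt; apply/negP => q_lt_p.
have sz_q_neq3 : size q != 3%N by apply/eqP => /quad'p; rewrite q_dv_p.
have [s s_dv_p /poly2_root [x sx]] : exists2 s, s %| p & size s = 2%N.
  have size_rq : (size r + size q).-1 = 5%N by rewrite -size_mul // -def_p.
  have [r_gt0 q_gt0] : (0 < size r)%N /\ (0 < size q)%N by rewrite !size_poly_gt0.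
  case: (size q =P 2%N) => [|sz_q_neq2]; first by exists q.
  exists r; first by rewrite def_p dvdp_mulr.
  move: q_lt_p sz_q_neq1 sz_q_neq3; rewrite size_p.
  move: (size r) (size q) size_rq r_gt0 q_gt0 sz_q_neq2; lia.
by have := root'p x; rewrite (root_dvdp s_dv_p sx).
Qed.

(* The hypotheses are the coefficient identities of (X^2 + a X + b) (X^2 + c X + d) = P. *)
Lemma quartic_factor_square (F : fieldType) (a b c d : F) :
    a + c = 0 -> b + d + a * c = 3%:R -> a * d + b * c = 0 -> b * d = 1 ->
  exists x : F, x ^+ 2 \in [:: 5%:R; -1; - 5%:R].
Proof.
move=> ac0; have {ac0} -> : c = - a by apply/eqP; rewrite -addr_eq0 addrC ac0.
move=> e2 e1 e0.
have [a0 | a_neq0] := eqVneq a 0.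
  exists (b - d); rewrite inE; apply/orP; left; apply/eqP.
  move: e2; rewrite a0 oppr0 mulr0 addr0 => e2.
  have -> : (b - d) ^+ 2 = (b + d) ^+ 2 - 4%:R * (b * d) by ring.
  by rewrite e2 e0; ring.
have db : d = b.
  have : a * (d - b) = 0 by rewrite -e1; ring.
  by move/eqP; rewrite mulf_eq0 (negPf a_neq0) subr_eq0 => /eqP.
have b_pm1 : b = 1 \/ b = -1.
  have : (b - 1) * (b + 1) = b * d - 1 by rewrite db; ring.
  by rewrite e0 subrr => /eqP; rewrite mulf_eq0 subr_eq0 addr_eq0 => /orP [] /eqP; [left | right].
have sqr_a : a ^+ 2 = b + b - 3%:R by rewrite -e2 db; ring.
exists a; rewrite sqr_a !inE; case: b_pm1 => ->.
- have -> : 1 + 1 - 3%:R = -1 :> F by ring.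
  by rewrite eqxx orbT.
- have -> : - 1 - 1 - 3%:R = - 5%:R :> F by ring.
  by rewrite eqxx !orbT.
Qed.

Section Quartic.
Variable F : fieldType.
Local Notation P := ('X^4 + 3%:R *: 'X^2 + 1 : {poly F}).

Lemma size_quartic : size P = 5%N.
Proof.
rewrite -addrA size_polyDl size_polyXn //; apply: (leq_ltn_trans (size_polyD _ _)).
by rewrite gtn_max size_poly1 (leq_ltn_trans (size_scale_leq _ _)) ?size_polyXn.
Qed.

Lemma lead_coef_quartic : lead_coef P = 1.
Proof. by rewrite lead_coefE size_quartic !coefE /= mulr0 !addr0. Qed.

Lemma quartic_monic_factors_coef (f g : {poly F}) :
    f \is monic -> g \is monic -> size f = 3%N -> size g = 3%N -> f * g = P ->
  [/\ f`_1 + g`_1 = 0, f`_0 + g`_0 + f`_1 * g`_1 = 3%:R,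
      f`_1 * g`_0 + f`_0 * g`_1 = 0 & f`_0 * g`_0 = 1].
Proof.
move=> /monicP f_monic /monicP g_monic size_f size_g fgP.
move: f_monic g_monic; rewrite !lead_coefE size_f size_g /= => f2 g2.
have [f3 g3] : f`_3 = 0 /\ g`_3 = 0 by rewrite !nth_default ?size_f ?size_g.
have coefP k : (f * g)`_k = P`_k by rewrite fgP.
move: (coefP 0%N) (coefP 1%N) (coefP 2%N) (coefP 3%N).
rewrite !coefM !big_ord_recr !big_ord0 /= ?subSS ?subn0 ?subnn f2 g2 f3 g3 !coefE /=.
rewrite !(add0r, addr0, mul0r, mulr0, mul1r, mulr1) => e0 e1 e2 e3.
by split=> //; [rewrite -e2 addrAC | rewrite addrC].
Qed.

Lemma quartic_quadratic_factor_square (q : {poly F}) :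
  size q = 3%N -> q %| P -> exists x : F, x ^+ 2 \in [:: 5%:R; -1; - 5%:R].
Proof.
move=> size_q /dvdpP [r def_P].
have nz_P : P != 0 by rewrite -size_poly_eq0 size_quartic.
have [nz_r nz_q] : r != 0 /\ q != 0.
  by apply/andP; rewrite -negb_or -mulf_eq0 -def_P.
have size_r : size r = 3%N.
  by have := size_mul nz_r nz_q; rewrite -def_P size_quartic size_q; move: (size r); lia.
have lead_rq : lead_coef r * lead_coef q = 1 by rewrite -lead_coefM -def_P lead_coef_quartic.
have [lr_neq0 lq_neq0] : lead_coef r != 0 /\ lead_coef q != 0 by rewrite !lead_coef_eq0.
have [] := @quartic_monic_factors_coef (lead_coef q *: r) (lead_coef r *: q).
- by rewrite monicE lead_coefZ mulrC lead_rq.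
- by rewrite monicE lead_coefZ lead_rq.
- by rewrite size_scale.
- by rewrite size_scale.
- by rewrite -scalerAl -scalerAr scalerA mulrC lead_rq scale1r def_P.
exact: quartic_factor_square.
Qed.

Lemma laurent_irreducible_quartic :
  (forall x : F, x ^+ 2 \notin [:: 5%:R; -1; - 5%:R]) -> laurent_irreducible P.
Proof.
move=> nonsquare; have no_root x : ~~ root P x.
  apply/negP => /rootP Px0; apply: (negP (nonsquare (2%:R * x ^+ 2 + 3%:R))).
  have -> : (2%:R * x ^+ 2 + 3%:R) ^+ 2 = 4%:R * P.[x] + 5%:R.
    by rewrite !hornerE /=; ring.
  by rewrite Px0 mulr0 add0r inE eqxx.
apply: laurent_irreducible_poly (no_root 0) _.
apply: quartic_irreducible size_quartic no_root _ => q size_q.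
apply/negP => /(quartic_quadratic_factor_square size_q) [x].
exact/negP/nonsquare.
Qed.
End Quartic.

Definition geometric_poly (R : nzRingType) (n : nat) : {poly R} := \sum_(i < n) 'X^i.

Lemma map_geometric_poly (R S : nzRingType) (f : {rmorphism R -> S}) n :
  map_poly f (geometric_poly R n) = geometric_poly S n.
Proof. by rewrite rmorph_sum; apply: eq_bigr => i _; rewrite rmorphXn /= map_polyX. Qed.

Lemma horner_geometric_poly (R : comNzRingType) n (x : R) :
  (geometric_poly R n).[x] = \sum_(i < n) x ^+ i.
Proof. by rewrite horner_sum; apply: eq_bigr => i _; rewrite hornerXn. Qed.

Lemma size_geometric_poly (R : nzRingType) n : size (geometric_poly R n) = n.
Proof.
rewrite /geometric_poly (eq_bigr (fun i : 'I_n => 1 *: 'X^i)) => [|i _]; last by rewrite scale1r.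
by rewrite -(poly_def n (fun=> 1)) size_poly_eq ?oner_eq0.
Qed.

Lemma prim_root_neq1 (R : nzRingType) n (z : R) :
  (1 < n)%N -> n.-primitive_root z -> z != 1.
Proof.
move=> n_gt1 prim_z; apply: contraTneq n_gt1 => z1; rewrite -leqNgt dvdn_leq //.
by rewrite (prim_order_dvd prim_z) expr1 z1.
Qed.

Lemma sum_prim_root (R : idomainType) n (z : R) :
  (1 < n)%N -> n.-primitive_root z -> \sum_(i < n) z ^+ i = 0.
Proof.
move=> n_gt1 prim_z; have := subrX1 z n; rewrite prim_expr_order // subrr => /esym/eqP.
by rewrite mulf_eq0 subr_eq0 (negPf (prim_root_neq1 n_gt1 prim_z)) => /eqP.
Qed.

Lemma prime_prim_root (R : nzRingType) p (z : R) :
  prime p -> z ^+ p = 1 -> z != 1 -> p.-primitive_root z.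
Proof.
move=> p_prime zp1 z_neq1.
have [m prim_z /(prime_nt_dvdP p_prime) m_eq_p] := prim_order_exists (prime_gt0 p_prime) zp1.
rewrite -m_eq_p //; apply: contraNneq z_neq1 => m1.
by rewrite -[z]expr1 -m1 prim_expr_order.
Qed.

Lemma geometric_poly_prime_factor_size (p : nat) (q : {poly rat}) :
  prime p -> (1 < size q)%N -> q %| geometric_poly rat p -> (p <= size q)%N.
Proof.
move=> p_prime q_gt1 q_dvd.
have /closed_rootP [y qy] : size (map_poly (ratr : rat -> algC) q) != 1%N.
  by rewrite size_map_poly; apply: contraTneq q_gt1 => ->.
have geom_y : root (geometric_poly algC p) y.
  by rewrite -(map_geometric_poly ratr) (root_dvdp _ qy) ?dvdp_map.
have y_neq1 : y != 1.
  apply: contraTneq geom_y => ->; rewrite /root horner_geometric_poly.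
  under eq_bigr do rewrite expr1n.
  by rewrite sumr_const card_ord pnatr_eq0 -lt0n prime_gt0.
have y_p : y ^+ p = 1.
  by apply/eqP; rewrite -subr_eq0 subrX1 -horner_geometric_poly (rootP geom_y) mulr0.
have prim_y := prime_prim_root p_prime y_p y_neq1.
have [r [min_y _] min_yP] := minCpolyP y.
have q_neq0 : q != 0 by rewrite -size_poly_gt0 ltnW.
have /(dvdp_leq q_neq0) : r %| q by rewrite -min_yP.
rewrite -(size_map_poly (ratr : {rmorphism rat -> algC})) -min_y (minCpoly_cyclotomic prim_y) size_cyclotomic.
by rewrite totient_prime // prednK ?prime_gt0.
Qed.

Lemma adjoin_degree_prime_root (L : fieldExtType rat) (p : nat) (z : L) :
  prime p -> p.-primitive_root z -> adjoin_degree 1%AS z = p.-1.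
Proof.
move=> p_prime prim_z.
have [q min_z] := polyOver1P (minPolyOver 1%AS z).
have : minPoly 1%AS z %| map_poly (in_alg L) (geometric_poly rat p).
  apply: minPoly_dvdp; first exact: alg_polyOver.
  by rewrite map_geometric_poly /root horner_geometric_poly sum_prim_root ?prime_gt1.
rewrite min_z dvdp_map => q_dvd.
have size_q : size q = (adjoin_degree 1%AS z).+1 by rewrite -size_minPoly min_z size_map_poly.
have q_gt1 : (1 < size q)%N by rewrite size_q.
have geom_neq0 : geometric_poly rat p != 0 by rewrite -size_poly_gt0 size_geometric_poly prime_gt0.
apply/eqP; rewrite -eqSS prednK ?prime_gt0 // -size_q eqn_leq.
rewrite geometric_poly_prime_factor_size // andbT.
by rewrite -(size_geometric_poly rat p) dvdp_leq.
Qed.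

Section SquareRoots.
Variables (F : fieldType) (L : fieldExtType F).
Implicit Types (K : {subfield L}) (x w : L).

Lemma adjoin_degree_sqrt K x : x ^+ 2 \in K -> x \notin K -> adjoin_degree K x = 2%N.
Proof.
move=> x2K xK; have nz_p : 'X^2 - (x ^+ 2)%:P != 0 by rewrite -size_poly_eq0 size_XnsubC.
have pK : 'X^2 - (x ^+ 2)%:P \is a polyOver K by rewrite polyOverXnsubC.
have px : root ('X^2 - (x ^+ 2)%:P) x by rewrite /root !hornerE subrr.
have := dvdp_leq nz_p (minPoly_dvdp pK px); rewrite size_minPoly size_XnsubC //.
have := adjoin_deg_eq1 K x; rewrite (negPf xK).
by rewrite /adjoin_degree; case: (_.-1) => [|[|[|]]].
Qed.

Lemma sqrt_mem_subfield K x :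
  ~~ (\dim K * 2 %| \dim {:L})%N -> x ^+ 2 \in K -> x \in K.
Proof.
move=> dim_L x2K; apply: contraR dim_L => xK.
by rewrite mulnC -(adjoin_degree_sqrt x2K xK) -dim_Fadjoin field_dimS ?subvf.
Qed.

Lemma mem_quadratic_adjoin w x : adjoin_degree 1%AS w = 2%N -> x \in <<1%AS; w>>%VS ->
  exists a b : F, x = a%:A + b%:A * w.
Proof.
move=> deg_w x_in.
have /polyOver1P [q def_q] := Fadjoin_polyOver 1%AS w x.
have size_q : (size q <= 2)%N by rewrite -deg_w -(size_map_poly (in_alg L)) -def_q size_Fadjoin_poly.
exists q`_0, q`_1.
rewrite -(Fadjoin_poly_eq x_in) def_q (@horner_coef_wide _ 2) ?size_map_poly //.
by rewrite !big_ord_recr big_ord0 /= !coef_map add0r expr0 mulr1 expr1.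
Qed.

Lemma alg_lin_indep w (a b : F) : w \notin 1%VS -> a%:A + b%:A * w = 0 -> a = 0 /\ b = 0.
Proof.
move=> w_notin_F abw0.
have b0 : b = 0.
  apply: contraNeq w_notin_F => b_neq0.
  have -> : w = (- a / b)%:A.
    have bA_neq0 : b%:A != 0 :> L by rewrite scaler_eq0 oner_eq0 orbF.
    apply: (mulfI bA_neq0); rewrite [RHS]mulr_algl scalerA [b * _]mulrC divfK // scaleNr.
    by apply/eqP; rewrite -addr_eq0 addrC abw0.
  by rewrite rpredZ ?mem1v.
move: abw0; rewrite b0 scale0r mul0r addr0 => /eqP.
by rewrite scaler_eq0 oner_eq0 orbF => /eqP.
Qed.
End SquareRoots.

Section RationalSquares.
Variables (F : numFieldType) (L : fieldExtType F) (d : F) (w : L).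
Hypotheses (sqr_w : w ^+ 2 = d%:A) (w_notin_F : w \notin 1%VS).
Hypothesis dim_L : ~~ (4 %| \dim {:L})%N.

Lemma sqr_alg_form (c : F) (x : L) :
  x ^+ 2 = c%:A -> exists r : F, c = r ^+ 2 \/ c = d * r ^+ 2.
Proof.
move=> sqr_x.
have deg_w : adjoin_degree 1%AS w = 2%N.
  by apply: adjoin_degree_sqrt => //; rewrite sqr_w memvZ ?mem1v.
have x_in : x \in <<1%AS; w>>%VS.
  apply: sqrt_mem_subfield; first by rewrite dim_Fadjoin deg_w dimv1.
  by rewrite sqr_x memvZ ?mem1v.
have [a [b def_x]] := mem_quadratic_adjoin deg_w x_in.
have : in_alg L (a ^+ 2 + d * b ^+ 2 - c) + in_alg L (2%:R * a * b) * w = 0.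
  rewrite !rmorphB !rmorphD !rmorphM rmorph_nat /=.
  by rewrite -sqr_x def_x -sqr_w; ring.
move=> /alg_lin_indep [] // /eqP; rewrite subr_eq0 => /eqP <- /eqP.
rewrite -mulrA mulf_eq0 pnatr_eq0 mulf_eq0 /= => /orP [] /eqP ->.
- by exists b; right; rewrite expr0n /= add0r.
- by exists a; left; rewrite expr0n /= mulr0 addr0.
Qed.
End RationalSquares.

Lemma rat_sqr_natr (q : rat) (k : nat) : q ^+ 2 = k%:R -> exists m, k = (m * m)%N.
Proof.
move=> sqr_q.
have sqr_num : numq q ^+ 2 = k%:Z * denq q ^+ 2.
  apply: (@intr_inj rat); rewrite intrM [in RHS]intrM (_ : (k%:Z)%:~R = k%:R) // -sqr_q numqE rmorphXn /=; ring.
have ND : (`|numq q| * `|numq q| = k * (`|denq q| * `|denq q|))%N.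
  by have := congr1 absz sqr_num; rewrite !expr2 !abszM.
move: ND; set N := `|numq q|%N; set D := `|denq q|%N => ND.
have D_dvd_NN : (D %| N * N)%N by rewrite ND dvdn_mull // dvdn_mulr.
have : coprime D (N * N) by rewrite coprimeMr coprime_sym coprime_num_den.
rewrite /coprime (gcdn_idPl D_dvd_NN) => /eqP D1.
by exists N; rewrite ND D1 !muln1.
Qed.

Lemma nat_square_between (m k n : nat) : (m * m < k < m.+1 * m.+1)%N -> (n * n != k)%N.
Proof.
move=> /andP [lt_k gt_k]; apply/eqP => nn_k.
have [le_nm | lt_mn] := leqP n m.
  by move: lt_k; rewrite -nn_k ltnNge leq_mul.
by move: gt_k; rewrite -nn_k ltnNge leq_mul.
Qed.

Lemma natr_not_rat_sqr (q : rat) (m k : nat) :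
  (m * m < k < m.+1 * m.+1)%N -> q ^+ 2 <> k%:R.
Proof.
move=> k_between /rat_sqr_natr [n k_nn].
by move: (nat_square_between n k_between); rewrite k_nn eqxx.
Qed.

Lemma quartic_constants_not_rat_sqr (c r : rat) :
  c \in [:: 5%:R; -1; - 5%:R] -> c <> r ^+ 2 /\ c <> - 7%:R * r ^+ 2.
Proof.
have r2_ge0 := sqr_ge0 r.
have nsq5 : r ^+ 2 <> 5%:R by apply: (@natr_not_rat_sqr _ 2).
have nsq7 : 7%:R ^+ 2 * r ^+ 2 <> 7%:R by rewrite -exprMn; apply: (@natr_not_rat_sqr _ 2).
have nsq35 : 7%:R ^+ 2 * r ^+ 2 <> 35%:R by rewrite -exprMn; apply: (@natr_not_rat_sqr _ 5).
move=> /predU1P [-> | /predU1P [-> | /predU1P [-> | //]]]; split=> e.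
- by apply: nsq5; lra.
- lra.
- lra.
- by apply: nsq7; lra.
- lra.
- by apply: nsq35; lra.
Qed.

Lemma gauss_period_sqr (R : comNzRingType) (z : R) :
  \sum_(i < 7) z ^+ i = 0 -> (2%:R * (z + z ^+ 2 + z ^+ 4) + 1) ^+ 2 = - 7%:R.
Proof.
move=> sum_z.
have z7 : z ^+ 7 = 1 by apply/eqP; rewrite -subr_eq0 subrX1 sum_z mulr0.
have : (2%:R * (z + z ^+ 2 + z ^+ 4) + 1) ^+ 2 + 7%:R
       = 8%:R * \sum_(i < 7) z ^+ i + 4%:R * z * (z ^+ 7 - 1).
  by rewrite !big_ord_recr big_ord0 /=; ring.
by rewrite sum_z z7 subrr !mulr0 addr0 => /eqP; rewrite addr_eq0 => /eqP.
Qed.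

Theorem mainTheorem6 (L : fieldExtType rat) (z : L)
    (hz : 7.-primitive_root z) (hgen : <<1%VS; z>>%VS = fullv) :
  laurent_irreducible ('X^4 + 3%:R *: 'X^2 + 1 : {poly L}).
Proof.
have dim_L : \dim {:L} = 6%N.
  by rewrite -hgen dim_Fadjoin (adjoin_degree_prime_root _ hz) ?dimv1.
pose w := 2%:R * (z + z ^+ 2 + z ^+ 4) + 1.
have sqr_w : w ^+ 2 = (- 7%:R : rat)%:A.
  by rewrite scaleNr scaler_nat gauss_period_sqr ?sum_prim_root.
have w_notin_Q : w \notin 1%VS.
  apply/vlineP => -[r def_w]; move: sqr_w; rewrite def_w exprZn expr1n.
  move/(fmorph_inj (in_alg L)) => sqr_r.
  by have := sqr_ge0 r; rewrite sqr_r; lra.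
have dim_L_4 : ~~ (4 %| \dim {:L})%N by rewrite dim_L.
apply: laurent_irreducible_quartic => x; apply/negP => x2_in.
have [c c_in x2c] : exists2 c : rat, c \in [:: 5%:R; -1; - 5%:R] & x ^+ 2 = c%:A.
  by apply/mapP; rewrite /= !scaleNr scale1r !scaler_nat.
have [r def_c] := sqr_alg_form sqr_w w_notin_Q dim_L_4 x2c.
have [ne_sqr ne_norm] := quartic_constants_not_rat_sqr r c_in.
by case: def_c; [apply: ne_sqr | apply: ne_norm].
Qed.
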